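(* Let $p:\tilde{Q}\to Q$ be a covering of finite quandles, and let $\Lambda$ be a subgroup of the deck transformation group $\mathrm{Aut}(p)$ that acts freely and transitively on each fiber $p^{-1}(q)$, $q\in Q$. Then there is a function $\phi:Q\times Q\to\Lambda$ such that $\Lambda\times_\phi Q$ is a quandle isomorphic to $\tilde{Q}$.
   Context: A quandle is a set with operation $*$ satisfying $a*a=a$; unique right division; $(a*b)*c=(a*c)*(b*c)$. $R_a(y)=y*a$. A covering is a quandle epimorphism $p:\tilde Q\to Q$ such that $p(y_1)=p(y_2)$ implies $R_{y_1}=R_{y_2}$. Its deck transformation group $\mathrm{Aut}(p)$ is the group of quandle automorphisms $\lambda$ of $\tilde{Q}$ with $p\circ\lambda=p$. For a (not necessarily abelian) group $\Lambda$ and a function $\phi:Q\times Q\to\Lambda$, $\Lambda\times_\phi Q$ denotes the set $\Lambda\times Q$ with $(\lambda,a)*(\mu,b)=(\lambda\phi(a,b),a*b)$. *)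

From mathcomp Require Import all_boot all_fingroup.
Set Implicit Arguments. Unset Strict Implicit. Unset Printing Implicit Defensive.

Definition is_quandle (T : Type) (op : T -> T -> T) : Prop :=
  [/\ forall a, op a a = a,
      forall a, bijective (fun y => op y a)
    & forall a b c, op (op a b) c = op (op a c) (op b c)].

Definition quandle_hom (T U : Type) (opT : T -> T -> T) (opU : U -> U -> U)
  (f : T -> U) : Prop := forall x y, f (opT x y) = opU (f x) (f y).

Definition covering (T U : Type) (opT : T -> T -> T) (opU : U -> U -> U)
  (p : T -> U) : Prop :=
  [/\ quandle_hom opT opU p,
      forall u, exists t, p t = u
    & forall y1 y2, p y1 = p y2 -> forall z, opT z y1 = opT z y2].

(* Deck transformation: a quandle automorphism l of the total space with
   p \o l = p.  Elements of {perm T} are automatically bijective. *)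
Definition deck_transformation (T U : finType) (opT : T -> T -> T)
  (p : T -> U) (l : {perm T}) : Prop :=
  quandle_hom opT opT l /\ forall x, p (l x) = p x.

Definition ext_op (G : finGroupType) (U : Type) (opU : U -> U -> U)
  (phi : U -> U -> G) (x y : G * U) : G * U :=
  ((x.1 * phi x.2 y.2)%g, opU x.2 y.2).

From mathcomp Require Import all_boot all_fingroup.

Set Implicit Arguments.
Unset Strict Implicit.
Unset Printing Implicit Defensive.

(* Choose a base point s u := [fiber_rep u] in every fiber. Since Lam acts
   simply transitively on fibers, each y is [s (p y)] moved by a unique
   [l_y^-1 \in Lam], and y |-> (l_y, p y) is a bijection onto Lam * Q. Deck
   transformations commute with the quandle operation and, by the covering
   property, [x * y] only depends on the fiber of y; hence
   l_{x * y} = l_x * phi (p x) (p y) (permutations compose left to right),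
   where phi a b is the element of Lam carrying s a * s b to s (a * b). The
   quandle axioms of Lam x_phi Q are then transported from QT along this
   bijection. *)

Lemma bij_hom_is_quandle (A B : Type) (opA : A -> A -> A) (opB : B -> B -> B)
  (f : A -> B) : is_quandle opA -> bijective f -> quandle_hom opA opB f ->
  is_quandle opB.
Proof.
move=> [idemA bijA distrA] [g fK gK] hom.
have opBE u v : opB u v = f (opA (g u) (g v)) by rewrite hom !gK.
split.
- by move=> a; rewrite opBE idemA gK.
- move=> a; have bij_conj : bijective (f \o (fun y => opA y (g a)) \o g).
    by apply: bij_comp; [apply: bij_comp; [exists g | apply: bijA] | exists f].
  by apply: (eq_bij bij_conj) => y /=; rewrite opBE.
- by move=> a b c; rewrite !opBE !fK distrA.
Qed.

Section RegularDeckAction.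

Variables (QT Q : finType) (opT : QT -> QT -> QT) (opQ : Q -> Q -> Q).
Variables (p : QT -> Q) (Lam : {group {perm QT}}).
Hypothesis cov_p : covering opT opQ p.
Hypothesis deck_Lam : forall l, l \in Lam -> deck_transformation opT p l.
Hypothesis trans_Lam : forall y1 y2, p y1 = p y2 -> exists2 l, l \in Lam & l y1 = y2.
Hypothesis free_Lam : forall l y, l \in Lam -> l y = y -> l = 1%g.

Local Notation Lsub := (subg_of Lam).

Lemma hom_p : quandle_hom opT opQ p.
Proof. by case: cov_p. Qed.

Lemma fiber_nonempty u : exists y, p y == u.
Proof. by case: cov_p => _ surj _; have [y <-] := surj u; exists y. Qed.

Definition fiber_rep u : QT := xchoose (fiber_nonempty u).

Lemma fiber_repK u : p (fiber_rep u) = u.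
Proof. exact/eqP/(xchooseP (fiber_nonempty u)). Qed.

Lemma deck_fiber (l : Lsub) y : p (sgval l y) = p y.
Proof. by case: (deck_Lam (subgP l)). Qed.

Lemma deck_hom (l : Lsub) : quandle_hom opT opT (sgval l).
Proof. by case: (deck_Lam (subgP l)). Qed.

Lemma deck_eq (l m : Lsub) y : sgval l y = sgval m y -> l = m.
Proof.
move=> lmy; apply: subg_inj.
have lmV_Lam : (sgval l * (sgval m)^-1)%g \in Lam by rewrite groupM ?groupV ?subgP.
have := free_Lam (y := y) lmV_Lam; rewrite permM lmy permK => /(_ erefl) /eqP.
by rewrite mulg_eq1 invgK => /eqP.
Qed.

Definition transport (y z : QT) : Lsub :=
  odflt 1%g [pick l : Lsub | sgval l y == z].

Lemma transportP y z : p y = p z -> sgval (transport y z) y = z.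
Proof.
move=> pyz; rewrite /transport; case: pickP => [l /eqP // | none].
have [l lL lyz] := trans_Lam pyz.
by have := none (subg Lam l); rewrite subgK // lyz eqxx.
Qed.

Definition cocycle (a b : Q) : Lsub :=
  transport (opT (fiber_rep a) (fiber_rep b)) (fiber_rep (opQ a b)).

Definition coord (y : QT) : Lsub * Q := (transport y (fiber_rep (p y)), p y).

Definition uncoord (z : Lsub * Q) : QT := ((sgval z.1)^-1%g : {perm QT}) (fiber_rep z.2).

Lemma coordK : cancel coord uncoord.
Proof.
by move=> y; rewrite /uncoord /= -{2}(transportP (esym (fiber_repK (p y)))) permK.
Qed.

Lemma uncoordK : cancel uncoord coord.
Proof.
move=> [l u]; rewrite /coord /uncoord /=.
have pu : p ((sgval l)^-1%g (fiber_rep u)) = u.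
  by case: (deck_Lam (groupVr (subgP l))) => _ ->; rewrite fiber_repK.
rewrite pu; congr (_, _); apply: (@deck_eq _ _ ((sgval l)^-1%g (fiber_rep u))).
by rewrite transportP ?pu ?fiber_repK // permKV.
Qed.

Lemma coord_bij : bijective coord.
Proof. exact: Bijective coordK uncoordK. Qed.

Lemma coord_hom : quandle_hom opT (ext_op opQ cocycle) coord.
Proof.
have [_ _ fiber_op] := cov_p.
move=> x y; rewrite /coord /ext_op /= hom_p; congr (_, _).
apply: (@deck_eq _ _ (opT x y)).
rewrite transportP; last by rewrite fiber_repK hom_p.
rewrite sgvalM ?inE // permM deck_hom transportP ?fiber_repK //.
rewrite (fiber_op _ (fiber_rep (p y))); last by rewrite deck_fiber fiber_repK.
by rewrite transportP ?hom_p ?fiber_repK.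
Qed.

End RegularDeckAction.

Theorem mainTheorem10 (QT Q : finType) (opT : QT -> QT -> QT) (opQ : Q -> Q -> Q)
  (p : QT -> Q) (Lam : {group {perm QT}}) :
  is_quandle opT -> is_quandle opQ ->
  covering opT opQ p ->
  (forall l, l \in Lam -> deck_transformation opT p l) ->
  (* Lam acts transitively on each fiber *)
  (forall y1 y2, p y1 = p y2 -> exists2 l, l \in Lam & l y1 = y2) ->
  (* Lam acts freely *)
  (forall l y, l \in Lam -> l y = y -> l = 1%g) ->
  exists phi : Q -> Q -> subg_of Lam,
    is_quandle (ext_op opQ phi) /\
    exists f : QT -> subg_of Lam * Q,
      bijective f /\ quandle_hom opT (ext_op opQ phi) f.
Proof.
move=> qT _ cov deck trans free.
have bij := coord_bij cov deck trans free.
have hom := coord_hom cov deck trans free.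
exists (cocycle Lam cov); split; first exact: bij_hom_is_quandle qT bij hom.
by exists (coord Lam cov).
Qed.
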